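(* For any real $C^1$ function $u$ on a domain in $\mathscr H$, at every point where $\mathrm{grad}\,u\ne0$, the $2$-element $d_0u\wedge d_1u$ is elementary strongly positive.
   Context: $\mathscr H=\mathbb R^{4n}\times\mathbb R$ with vector fields $X_{2l-1}=\partial_{x_{2l-1}}-2x_{2l}\partial_t$, $X_{2l}=\partial_{x_{2l}}+2x_{2l-1}\partial_t$ ($l=1,\dots,2n$). For $l=0,\dots,n-1$: $Z_{l0'}=X_{4l+1}+\mathbf iX_{4l+2}$, $Z_{l1'}=-X_{4l+3}-\mathbf iX_{4l+4}$, $Z_{(n+l)0'}=X_{4l+3}-\mathbf iX_{4l+4}$, $Z_{(n+l)1'}=X_{4l+1}-\mathbf iX_{4l+2}$. Fix a basis $\omega^0,\dots,\omega^{2n-1}$ of $\mathbb C^{2n}$; $d_\alpha u=\sum_{A=0}^{2n-1}Z_{A\alpha'}u\,\omega^A$ ($\alpha=0,1$). For a quaternionic $k\times n$ matrix $\mathcal M=a+b\mathbf j$ ($a,b$ complex $k\times n$) put $\tau(\mathcal M)=\begin{pmatrix}a&-b\\\bar b&\bar a\end{pmatrix}$. A right $\mathbb H$-linear map $\eta:\mathbb H^n\to\mathbb H$ is a $1\times n$ quaternionic row; set $\eta^*\tilde\omega^p=\sum_{j=0}^{2n-1}\tau(\eta)_{pj}\omega^j$, $p=0,1$. An element of $\wedge^{2k}\mathbb C^{2n}$ is elementary strongly positive if it equals $\eta_1^*\tilde\omega^0\wedge\eta_1^*\tilde\omega^1\wedge\cdots\wedge\eta_k^*\tilde\omega^0\wedge\eta_k^*\tilde\omega^1$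 for some linearly independent right $\mathbb H$-linear maps $\eta_1,\dots,\eta_k:\mathbb H^n\to\mathbb H$. *)

From HB Require Import structures.
From mathcomp Require Import all_boot all_order all_algebra.
From mathcomp Require Import all_classical all_reals all_analysis.
From mathcomp Require Import complex.
Set Implicit Arguments. Unset Strict Implicit. Unset Printing Implicit Defensive.
Import Order.TTheory GRing.Theory Num.Theory.
Import numFieldNormedType.Exports.
Local Open Scope ring_scope.
Local Open Scope classical_set_scope.

(* The quaternionic Heisenberg group  H = R^{4n} x R  is modelled as
   'rV[R]_((4*n).+1): coordinate with 0-based index m < 4n is x_{m+1},
   the last coordinate (index 4n = ord_max) is t. *)
Definition Hpt (R : realType) (n : nat) := 'rV[R]_((4 * n).+1).

Definition xco (R : realType) (n : nat) (p : Hpt R n) (m : nat) : R :=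
  p 0 (inord m).

Definition ex (R : realType) (n : nat) (m : nat) : Hpt R n :=
  \row_(j < (4 * n).+1) (if (j : nat) == m then 1 else 0).
Definition et (R : realType) (n : nat) : Hpt R n :=
  \row_(j < (4 * n).+1) (if (j : nat) == 4 * n then 1 else 0).

(* The left-invariant vector field X_{m+1} at p, as a tangent vector
   (0-based m):  X_{2l-1} = d_{x_{2l-1}} - 2 x_{2l} d_t,
                 X_{2l}   = d_{x_{2l}}   + 2 x_{2l-1} d_t. *)
Definition Xdir (R : realType) (n : nat) (p : Hpt R n) (m : nat) : Hpt R n :=
  if odd m then ex R n m + (2 * xco p m.-1) *: et R n
  else ex R n m - (2 * xco p m.+1) *: et R n.

Definition Xu (R : realType) (n : nat) (u : Hpt R n -> R) (p : Hpt R n)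
  (m : nat) : R := 'D_(Xdir p m) u p.

Definition hgrad (R : realType) (n : nat) (u : Hpt R n -> R) (p : Hpt R n)
  : 'rV[R]_(4 * n) := \row_(m < 4 * n) Xu u p m.

Definition C1_on (R : realType) (n : nat) (D : set (Hpt R n))
  (u : Hpt R n -> R) : Prop :=
  forall j : 'I_((4 * n).+1),
    (forall x, D x -> derivable u x (ex R n j)) /\
    {within D, continuous (fun x => 'D_(ex R n j) u x)}.

Definition cplx (R : realType) (a b : R) : R[i] := Complex a b.

Definition Zu (R : realType) (n : nat) (u : Hpt R n -> R) (p : Hpt R n)
  (A : 'I_(n + n)) (alpha : 'I_2) : R[i] :=
  let X k := Xu u p k in
  match fintype.split A with
  | inl l => if (alpha : nat) == 0%N
             then cplx (X (4 * l)%N) (X (4 * l + 1)%N)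
             else cplx (- X (4 * l + 2)%N) (- X (4 * l + 3)%N)
  | inr l => if (alpha : nat) == 0%N
             then cplx (X (4 * l + 2)%N) (- X (4 * l + 3)%N)
             else cplx (X (4 * l)%N) (- X (4 * l + 1)%N)
  end.

(* d_alpha u at p, as its coordinate vector in the basis omega^0..omega^{2n-1}
   of C^{2n} *)
Definition d_alpha (R : realType) (n : nat) (alpha : 'I_2)
  (u : Hpt R n -> R) (p : Hpt R n) : 'rV[R[i]]_(n + n) :=
  \row_(A < n + n) Zu u p A alpha.

(* wedge of two 1-vectors in C^N, represented by its (antisymmetric)
   coefficient matrix: v /\ w = sum_{i<j} (v_i w_j - v_j w_i) omega^i/\omega^j *)
Definition wedge2 (C : comRingType) (N : nat) (v w : 'rV[C]_N) : 'M[C]_N :=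
  \matrix_(i < N, j < N) (v 0 i * w 0 j - v 0 j * w 0 i).

(* quaternionic 1 x n row  eta = a + b j  (a, b complex 1 x n rows);
   tau(eta) = [[a, -b], [conj b, conj a]];  eta^* omega~^p = row p of tau(eta) *)
Definition tau_row0 (R : realType) (n : nat) (a b : 'rV[R[i]]_n)
  : 'rV[R[i]]_(n + n) := row_mx a (- b).
Definition tau_row1 (R : realType) (n : nat) (a b : 'rV[R[i]]_n)
  : 'rV[R[i]]_(n + n) := row_mx (map_mx conjc b) (map_mx conjc a).

(* elementary strongly positive 2-element (case k = 1): equals
   eta^* omega~^0 /\ eta^* omega~^1 for a linearly independent (i.e. nonzero)
   right H-linear map eta = a + b j : H^n -> H *)
Definition elem_strongly_positive2 (R : realType) (n : nat)
  (w : 'M[R[i]]_(n + n)) : Prop :=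
  exists a b : 'rV[R[i]]_n, (a != 0 \/ b != 0) /\
    w = wedge2 (tau_row0 a b) (tau_row1 a b).

From HB Require Import structures.
From mathcomp Require Import all_boot all_order all_algebra.
From mathcomp Require Import all_classical all_reals all_analysis.
From mathcomp Require Import complex.
Set Implicit Arguments. Unset Strict Implicit. Unset Printing Implicit Defensive.
Import Order.TTheory GRing.Theory Num.Theory.
Import numFieldNormedType.Exports.
Local Open Scope ring_scope.
Local Open Scope classical_set_scope.

(* The statement is pointwise and purely algebraic. Group the horizontal
   derivatives (X_1 u, ..., X_4n u) at p into the quaternionic row
   eta = a + b j with a_l = X_{4l+1} u + i X_{4l+2} u and
   b_l = - X_{4l+3} u + i X_{4l+4} u. The definitions of the Z_{A alpha'}
   say exactly that d_0 u and d_1 u are the two rows of tau(eta), so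
   d_0 u /\ d_1 u = eta^* omega~^0 /\ eta^* omega~^1, and eta is nonzero
   because its four real components per block are the entries of the
   horizontal gradient. *)

Section QuaternionicRow.

Variables (R : realType) (n : nat) (x : nat -> R).

Definition quat_row_a : 'rV[R[i]]_n :=
  \row_(l < n) cplx (x (4 * l)) (x (4 * l + 1)).

Definition quat_row_b : 'rV[R[i]]_n :=
  \row_(l < n) cplx (- x (4 * l + 2)) (x (4 * l + 3)).

Lemma quat_rows_eq0 :
  quat_row_a = 0 -> quat_row_b = 0 -> forall m, (m < 4 * n)%N -> x m = 0.
Proof.
move=> a0 b0 m ltm; have ltl : (m %/ 4 < n)%N by rewrite ltn_divLR // mulnC.
have /eqP := congr1 (fun v : 'rV_n => v 0 (Ordinal ltl)) a0.
rewrite !mxE eq_complex /= => /andP[/eqP x0 /eqP x1].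
have /eqP := congr1 (fun v : 'rV_n => v 0 (Ordinal ltl)) b0.
rewrite !mxE eq_complex /= oppr_eq0 => /andP[/eqP x2 /eqP x3].
rewrite (divn_eq m 4) mulnC.
by case: (m %% 4)%N (ltn_mod m 4) => [|[|[|[|]]]] //; rewrite addn0.
Qed.

End QuaternionicRow.

Section HorizontalGradient.

Variables (R : realType) (n : nat) (u : Hpt R n -> R) (p : Hpt R n).

Lemma d_alpha0E :
  d_alpha 0 u p = tau_row0 (quat_row_a n (Xu u p)) (quat_row_b n (Xu u p)).
Proof.
apply/rowP => A; rewrite /tau_row0 mxE -[A]splitK.
case: (fintype.split A) => l; rewrite /Zu unsplitK /=.
  by rewrite row_mxEl !mxE.
by rewrite row_mxEr !mxE; apply/eqP; rewrite eq_complex /= opprK !eqxx.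
Qed.

Lemma d_alpha1E :
  d_alpha 1 u p = tau_row1 (quat_row_a n (Xu u p)) (quat_row_b n (Xu u p)).
Proof.
apply/rowP => A; rewrite /tau_row1 mxE -[A]splitK.
by case: (fintype.split A) => l; rewrite /Zu unsplitK /= ?row_mxEl ?row_mxEr !mxE.
Qed.

Lemma hgrad_eq0 : (forall m, (m < 4 * n)%N -> Xu u p m = 0) -> hgrad u p = 0.
Proof. by move=> Xu0; apply/rowP => m; rewrite !mxE Xu0. Qed.

End HorizontalGradient.

Theorem proposition4p2 (R : realType) (n : nat) (D : set (Hpt R n))
  (u : Hpt R n -> R) :
  open D -> connected D -> C1_on D u ->
  forall p : Hpt R n, D p -> hgrad u p != 0 ->
  elem_strongly_positive2
    (wedge2 (d_alpha (0 : 'I_2) u p) (d_alpha (1 : 'I_2) u p)).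
Proof.
move=> _ _ _ p _ grad_neq0.
exists (quat_row_a n (Xu u p)), (quat_row_b n (Xu u p)).
split; last by rewrite d_alpha0E d_alpha1E.
apply/orP; rewrite -negb_and; apply: contra grad_neq0 => /andP[/eqP a0 /eqP b0].
exact/eqP/hgrad_eq0/(quat_rows_eq0 a0 b0).
Qed.
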